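(* Let $k\ge1$, and let $\mathcal P=\{p_1,\dots,p_{k^2}\}$ be a family of real polynomials in the commuting variables $x_1,\dots,x_{2k^2}$ admitting an nc representation $p(X,Y)$ of degree $d>1$. Let $s>t\ge2$ and $a\ne0$, and suppose that, counting over all polynomials, exactly $k$ terms of the form $a\,x_u^sx_v^t$ ($u\ne v$) appear in the family, namely $a\,x_{i_1}^sx_{j_1}^t,\dots,a\,x_{i_k}^sx_{j_k}^t$. If for each $n$ one of $x_{i_n},x_{j_n}$ is a diagonal entry of $X$ and the other is the diagonal entry of $Y$ in the same position, then $x_{i_1},\dots,x_{i_k}$ are the diagonal entries of one of the matrices $X,Y$ and $x_{j_1},\dots,x_{j_k}$ are the diagonal entries of the other.
   Context: The family $\mathcal P$ admits an nc representation $p(X,Y)$ if there are $k\times k$ matrices $X,Y$ whose $2k^2$ entries are the variables $x_1,\dots,x_{2k^2}$, each used exactly once, and a noncommutative polynomial $p$ in two letters with real coefficients such that the matrix $p(X,Y)$ is a $k\times k$ array whose entries are $p_1,\dots,p_{k^2}$, each exactly once. A ''term'' means a monomial with its nonzero coefficient after collecting like terms. *)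

From HB Require Import structures.
From mathcomp Require Import all_boot all_order all_algebra.
From mathcomp Require Import mpoly.
Set Implicit Arguments. Unset Strict Implicit. Unset Printing Implicit Defensive.
Import Order.TTheory GRing.Theory Num.Theory.
Local Open Scope ring_scope.

(* A noncommutative polynomial in two letters X (false) and Y (true) with
   coefficients in R is given by its coefficient function on words;
   it has degree d when all words longer than d have coefficient 0 and
   some word of length d has nonzero coefficient. *)
Definition ncpoly (R : Type) := seq bool -> R.

Definition nc_has_degree (R : ringType) (p : ncpoly R) (d : nat) : Prop :=
  (forall w : seq bool, (d < size w)%N -> p w = 0) /\
  (exists w : seq bool, size w = d /\ p w != 0).

Definition word_eval (A : ringType) (k : nat) (MX MY : 'M[A]_k) (w : seq bool)
  : 'M[A]_k :=
  foldr (fun b M => (if b then MY else MX) *m M) 1%:M w.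

Definition nc_eval (R : comRingType) (A : comRingType) (emb : R -> A)
    (p : ncpoly R) (d k : nat) (MX MY : 'M[A]_k) : 'M[A]_k :=
  \sum_(l < d.+1) \sum_(w : l.-tuple bool)
     (emb (p (tval w))) *: word_eval MX MY (tval w).

Definition var_mx (R : comRingType) (n k : nat) (V : 'M['I_n]_k)
  : 'M[{mpoly R[n]}]_k := map_mx (fun i => 'X_i) V.

(* X and Y together use each variable exactly once *)
Definition nc_var_layout (n k : nat) (X Y : 'M['I_n]_k) : Prop :=
  bijective (fun e : ('I_k * 'I_k) + ('I_k * 'I_k) =>
               match e with inl (i, j) => X i j | inr (i, j) => Y i j end).

Definition mono_st (n : nat) (u v : 'I_n) (s t : nat) : 'X_{1..n} :=
  mnm_add (mnm_muln (mnm1 u) s) (mnm_muln (mnm1 v) t).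

(* The family P = entries of p(X,Y) indexed by positions (i,j).
   The terms of the form a x_u^s x_v^t (u <> v) counted over all
   polynomials: triples (position, (u, v)). *)
Definition st_terms (R : comRingType) (n k : nat)
    (P : 'M[{mpoly R[n]}]_k) (a : R) (s t : nat)
  : {set ('I_k * 'I_k) * ('I_n * 'I_n)} :=
  [set e | (e.2.1 != e.2.2) && ((P e.1.1 e.1.2)@_(mono_st e.2.1 e.2.2 s t) == a)].

Definition diag_vars (n k : nat) (V : 'M['I_n]_k) : {set 'I_n} :=
  [set V m m | m : 'I_k].

From HB Require Import structures.
From mathcomp Require Import all_boot all_order all_algebra.
From mathcomp Require Import mpoly.
From mathcomp Require Import zify.
Import Order.TTheory GRing.Theory Num.Theory.
Local Open Scope ring_scope.

(* The variables of the diagonal position m occur only in the entry (m, m) of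
   X and Y, so the coefficient of x_{X_mm}^a x_{Y_mm}^b in entry (i, j) of
   p(X, Y) is [i = j = m] times the sum c(a, b) of the coefficients of p on the
   words with a letters X and b letters Y ([nc_count_coef]).  Hence the terms
   a x_u^s x_v^t of diagonal type are either all k terms with
   (u, v) = (X_mm, Y_mm) (when c(s, t) = a) or none of them, and likewise for
   (u, v) = (Y_mm, X_mm) with c(t, s).  As there are exactly k >= 1 such terms,
   exactly one of the two alternatives occurs. *)

Section MonomialCoefficients.
Variables (R : comNzRingType) (n : nat).

Lemma mcoeffXM (z : 'I_n) (q : {mpoly R[n]}) mu :
  ('X_z * q)@_mu = if (0 < mu z)%N then q@_(mu - U_(z))%MM else 0.
Proof.
case: ifP => mu_z.
  have -> : mu = (U_(z) + (mu - U_(z)))%MM.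
    apply/mnmP => i; rewrite mnmDE mnmBE mnm1E.
    by case: eqP => [<-|_]; rewrite ?subn0 // add1n subn1 prednK.
  by rewrite mulrC mcoeffMX addmC addmK.
rewrite mcoeffM big1 // => mm /eqP mu_mm.
rewrite mcoeffX; case: eqP => [U_mm|_]; last by rewrite mul0r.
by exfalso; move: mu_z; rewrite mu_mm mnmDE -U_mm mnm1E eqxx.
Qed.

Lemma mcoeff_sum (I : Type) (r : seq I) (P : pred I) (F : I -> {mpoly R[n]}) mu :
  (\sum_(i <- r | P i) F i)@_mu = \sum_(i <- r | P i) (F i)@_mu.
Proof. exact: raddf_sum. Qed.

Lemma mono_stE (u v z : 'I_n) a b :
  mono_st u v a b z = ((u == z) * a + (v == z) * b)%N.
Proof. by rewrite /mono_st mnmDE !mulmnE !mnm1E mulnC [(_ * b)%N]mulnC. Qed.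

Lemma mono_stC (u v : 'I_n) a b : mono_st u v a b = mono_st v u b a.
Proof. by rewrite /mono_st addmC. Qed.

Lemma mono_st_eq0 (u v : 'I_n) a b : u != v ->
  (mono_st u v a b == 0%MM) = (a == 0%N) && (b == 0%N).
Proof.
move=> uv; apply/eqP/andP => [mono0|[/eqP-> /eqP->]]; last first.
  by apply/mnmP => z; rewrite mono_stE mnm0E !muln0.
have := congr1 (fun m : 'X_{1..n} => m u) mono0.
have := congr1 (fun m : 'X_{1..n} => m v) mono0.
rewrite /= !mono_stE !mnm0E !eqxx (negbTE uv) eq_sym (negbTE uv) /=.
by rewrite !mul0n !mul1n add0n addn0 => -> ->.
Qed.

Lemma mono_stB1 (u v : 'I_n) a b : u != v ->
  (mono_st u v a.+1 b - U_(u))%MM = mono_st u v a b.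
Proof.
move=> uv; apply/mnmP => z; rewrite mnmBE !mono_stE mnm1E.
case: (eqVneq u z) => [<-|_]; last by rewrite !mul0n !add0n subn0.
by rewrite eq_sym (negbTE uv) !mul1n !mul0n !addn0 subn1.
Qed.

End MonomialCoefficients.

Definition nc_count_coef {R : nzRingType} (p : ncpoly R) (d a b : nat) : R :=
  \sum_(l < d.+1) \sum_(w : l.-tuple bool)
     p (tval w) * ((a == count negb w) && (b == count id w))%:R.

Definition diag_terms {n k : nat} (U V : 'M['I_n]_k)
  : {set ('I_k * 'I_k) * ('I_n * 'I_n)} :=
  [set ((m, m), (U m m, V m m)) | m : 'I_k].

Section DiagonalTerms.
Variables (n k : nat) (U V : 'M['I_n]_k).

Lemma card_diag_terms : #|diag_terms U V| = k.
Proof. by rewrite card_imset ?cardsT ?card_ord // => m m' []. Qed.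

Lemma diag_terms_fst : [set e.2.1 | e in diag_terms U V] = diag_vars U.
Proof. by rewrite -imset_comp. Qed.

Lemma diag_terms_snd : [set e.2.2 | e in diag_terms U V] = diag_vars V.
Proof. by rewrite -imset_comp. Qed.

End DiagonalTerms.

Section DiagonalCoefficients.
Context {R : comNzRingType} {n k : nat} {X Y : 'M['I_n]_k}.
Hypothesis layout : nc_var_layout X Y.

Let layout_inj := bij_inj layout.

Lemma eq_var_XX i j i' j' : (X i j == X i' j') = (i == i') && (j == j').
Proof.
by apply/eqP/andP => [/(layout_inj (inl (i, j)) (inl (i', j'))) [-> ->]|[/eqP-> /eqP->]].
Qed.

Lemma eq_var_YY i j i' j' : (Y i j == Y i' j') = (i == i') && (j == j').
Proof.
by apply/eqP/andP => [/(layout_inj (inr (i, j)) (inr (i', j'))) [-> ->]|[/eqP-> /eqP->]].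
Qed.

Lemma eq_var_XY i j i' j' : (X i j == Y i' j') = false.
Proof. by apply/eqP => /(layout_inj (inl (i, j)) (inr (i', j'))). Qed.

Lemma eq_var_YX i j i' j' : (Y i j == X i' j') = false.
Proof. by rewrite eq_sym eq_var_XY. Qed.

Lemma word_eval_coef_diag (w : seq bool) (m i j : 'I_k) a b :
  (word_eval (var_mx R X) (var_mx R Y) w i j)@_(mono_st (X m m) (Y m m) a b)
  = [&& a == count negb w, b == count id w, i == j &
        (size w == 0%N) || (i == m)]%:R.
Proof.
have XY_mm : X m m != Y m m by rewrite eq_var_XY.
elim: w i j a b => [|c w IHw] i j a b.
  rewrite /word_eval /= mxE -mpolyC_nat mcoeffC mono_st_eq0 //.
  by case: (i == j); case: (a == 0%N); case: (b == 0%N); rewrite ?mulr1 ?mulr0.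
rewrite /word_eval /= -/(word_eval _ _ w) mxE mcoeff_sum.
case: c => /=.
- under eq_bigr => l _ do rewrite mxE mcoeffXM mono_stE eq_var_XY eq_var_YY.
  rewrite (bigD1 m) //= big1 => [|l /negbTE lm]; last first.
    by rewrite [m == l]eq_sym lm andbF /= ?mul0n ?muln0.
  rewrite eqxx andbT addr0; case: (eqVneq m i) => [<-|_]; last by rewrite !andbF.
  case: b => [|b] /=; first by rewrite andbF.
  by rewrite mono_stC mono_stB1 ?eq_var_YX // -mono_stC IHw eqxx orbT add1n eqSS.
- under eq_bigr => l _ do rewrite mxE mcoeffXM mono_stE eq_var_YX eq_var_XX.
  rewrite (bigD1 m) //= big1 => [|l /negbTE lm]; last first.
    by rewrite [m == l]eq_sym lm andbF /= ?mul0n ?muln0.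
  rewrite eqxx andbT addr0; case: (eqVneq m i) => [<-|_]; last by rewrite !andbF.
  case: a => [|a] //=.
  by rewrite mono_stB1 // IHw eqxx orbT add1n eqSS.
Qed.

Lemma nc_eval_coef_diag (p : ncpoly R) (d : nat) (m i j : 'I_k) a b :
  (0 < a + b)%N ->
  (nc_eval (fun c : R => c%:MP) p d (var_mx R X) (var_mx R Y) i j)
     @_(mono_st (X m m) (Y m m) a b)
  = ((i == m) && (j == m))%:R * nc_count_coef p d a b.
Proof.
move=> ab_gt0; rewrite /nc_eval /nc_count_coef summxE mcoeff_sum mulr_sumr.
apply: eq_bigr => l _; rewrite summxE mcoeff_sum mulr_sumr; apply: eq_bigr => w _.
rewrite mxE mcoeffCM word_eval_coef_diag mulrCA; congr (_ * _).
case: (eqVneq a (count negb w)) => [ea|]; last by rewrite mulr0.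
case: (eqVneq b (count id w)) => [eb|]; last by rewrite mulr0.
have size_w : size w = (a + b)%N by rewrite -(count_predC id) addnC ea eb.
rewrite mulr1 size_w (negbTE (lt0n_neq0 ab_gt0)) /=.
by case: (eqVneq i m) => [->|_]; rewrite ?andbF // andbT eq_sym.
Qed.

Lemma diag_termsI : diag_terms X Y :&: diag_terms Y X = set0.
Proof.
apply/setP => e; rewrite !inE; apply/negP => /andP[/imsetP[m _ ->]].
by case/imsetP => m' _ [_ _ /eqP]; rewrite eq_var_XY.
Qed.

Section StTerms.
Context {p : ncpoly R} {d s t : nat} {a : R}.
Hypotheses (a_neq0 : a != 0) (st_gt0 : (0 < s + t)%N).

Let T := st_terms (nc_eval (fun c : R => c%:MP) p d (var_mx R X) (var_mx R Y))
  a s t.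

Lemma mem_st_terms_diag ij (m : 'I_k) :
  ((ij, (X m m, Y m m)) \in T) = (ij == (m, m)) && (nc_count_coef p d s t == a)
  /\ ((ij, (Y m m, X m m)) \in T) = (ij == (m, m)) && (nc_count_coef p d t s == a).
Proof.
have a_coef i j c : (((i == m) && (j == m))%:R * c == a) = [&& i == m, j == m & c == a].
  by case: (i == m); case: (j == m); rewrite ?mul1r ?mul0r // eq_sym (negbTE a_neq0).
case: ij => i j; rewrite xpair_eqE -!andbA !inE /= eq_var_XY eq_var_YX /=.
rewrite [mono_st (Y m m) _ _ _]mono_stC !nc_eval_coef_diag ?[(t + s)%N]addnC //.
Qed.

Lemma st_terms_diagE :
  (forall e, e \in T -> exists m : 'I_k,
      (e.2.1 = X m m /\ e.2.2 = Y m m) \/ (e.2.1 = Y m m /\ e.2.2 = X m m)) ->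
  T = (if nc_count_coef p d s t == a then diag_terms X Y else set0)
      :|: (if nc_count_coef p d t s == a then diag_terms Y X else set0).
Proof.
move=> T_diag; apply/setP => -[ij [u v]]; rewrite in_setU; apply/idP/idP.
- move=> eT; have [m [[/= u_mm v_mm]|[/= u_mm v_mm]]] := T_diag _ eT;
    subst u v; move: eT.
  + have [-> _] := mem_st_terms_diag ij m.
    by case/andP => /eqP-> ->; apply/orP; left; exact: imset_f.
  + have [_ ->] := mem_st_terms_diag ij m.
    by case/andP => /eqP-> ->; apply/orP; right; exact: imset_f.
- by case/orP; case: ifP => c_eq; rewrite ?in_set0 // => /imsetP[m _ [-> -> ->]];
    have [memXY memYX] := mem_st_terms_diag (m, m) m; rewrite ?memXY ?memYX eqxx c_eq.
Qed.

End StTerms.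

End DiagonalCoefficients.

Theorem lemma2p19 (R : realFieldType) (k : nat) (X Y : 'M['I_(2 * k ^ 2)]_k)
    (p : ncpoly R) (d : nat) (s t : nat) (a : R) :
  (1 <= k)%N ->
  nc_var_layout X Y ->
  nc_has_degree p d -> (1 < d)%N ->
  (t < s)%N -> (2 <= t)%N -> a != 0 ->
  let P := nc_eval (fun c : R => c%:MP) p d (var_mx R X) (var_mx R Y) in
  let T := st_terms P a s t in
  #|T| = k ->
  (forall e, e \in T -> exists m : 'I_k,
      (e.2.1 = X m m /\ e.2.2 = Y m m) \/ (e.2.1 = Y m m /\ e.2.2 = X m m)) ->
  ([set e.2.1 | e in T] = diag_vars X /\ [set e.2.2 | e in T] = diag_vars Y) \/
  ([set e.2.1 | e in T] = diag_vars Y /\ [set e.2.2 | e in T] = diag_vars X).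
Proof.
move=> k_gt0 layout _ _ _ t_ge2 a_neq0 P T T_card T_diag.
have st_gt0 : (0 < s + t)%N by rewrite addn_gt0 (leq_trans _ t_ge2) ?orbT.
have T_eq : T = _ := st_terms_diagE layout a_neq0 st_gt0 T_diag.
rewrite T_eq in T_card *.
case: (_ == a) T_card; case: (_ == a); rewrite ?setU0 ?set0U ?cards0 => T_card.
- move: T_card; rewrite cardsU (diag_termsI layout) cards0 !card_diag_terms; lia.
- by left; rewrite diag_terms_fst diag_terms_snd.
- by right; rewrite diag_terms_fst diag_terms_snd.
- by exfalso; move: k_gt0; rewrite -T_card.
Qed.
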